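(* Let $n\ge 1$, $q\in\mathbb{C}^\times$, and let $\mathcal A$ be an associative unital algebra containing mutually commuting elements $\lambda_1,\dots,\lambda_n$ such that all differences $\lambda_i-\lambda_k$ ($i\neq k$) are invertible, and mutually commuting invertible elements $\mu_1,\dots,\mu_n$, satisfying $$\mu_j\lambda_j=q\,\lambda_j\mu_j,\qquad \mu_j\lambda_i=\lambda_i\mu_j\quad(i\neq j).$$ With $S_i(\lambda)=\prod_{k\neq i}(\lambda-\lambda_k)/\prod_{k\neq i}(\lambda_i-\lambda_k)$, define for $\lambda\in\mathbb{C}$ $$2P(\lambda)=\Big(\lambda+\sum_{i=1}^n\lambda_i\Big)\prod_{i=1}^n(\lambda-\lambda_i)+\sum_{i=1}^n S_i(\lambda)\,(\mu_i+\mu_i^{-1}),$$ (with functions of the $\lambda_k$ to the left of $\mu_i^{\pm1}$). Then $[P(\lambda),P(\lambda')]=0$ for all $\lambda,\lambda'\in\mathbb{C}$.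
   Context: $2P(\lambda)$ is the polynomial of degree $n+1$ with leading term $\lambda^{n+1}$ and no $\lambda^n$ term (center-of-mass frame) that solves the quantum Baxter equations $2P(\lambda_i)=\mu_i+\mu_i^{-1}$ associated with the Toda chain spectral curve $\mu+\mu^{-1}=2P(\lambda)$. *)

From HB Require Import structures.
From mathcomp Require Import all_boot all_order all_algebra.
From mathcomp Require Import complex.
From mathcomp Require Import Rstruct.
Set Implicit Arguments. Unset Strict Implicit. Unset Printing Implicit Defensive.
Import Order.TTheory GRing.Theory Num.Theory.
Local Open Scope ring_scope.

Definition CC : fieldType := complex Rdefinitions.R.

(* S_i(z) = prod_{k<>i} (z - lambda_k) * prod_{k<>i} (lambda_i - lambda_k)^{-1},
   where dinv i k is the (given) two-sided inverse of lambda_i - lambda_k. *)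
Definition S_i (A : algType CC) (n : nat) (lam : 'I_n -> A)
  (dinv : 'I_n -> 'I_n -> A) (i : 'I_n) (z : CC) : A :=
  (\prod_(k < n | k != i) (z%:A - lam k)) * (\prod_(k < n | k != i) dinv i k).

Definition twoP (A : algType CC) (n : nat) (lam mu muinv : 'I_n -> A)
  (dinv : 'I_n -> 'I_n -> A) (z : CC) : A :=
  (z%:A + \sum_(i < n) lam i) * (\prod_(i < n) (z%:A - lam i))
  + \sum_(i < n) S_i lam dinv i z * (mu i + muinv i).

Definition P (A : algType CC) (n : nat) (lam mu muinv : 'I_n -> A)
  (dinv : 'I_n -> 'I_n -> A) (z : CC) : A :=
  (2%:R^-1 : CC) *: twoP lam mu muinv dinv z.

From HB Require Import structures.
From mathcomp Require Import all_boot all_order all_algebra.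
From mathcomp Require Import complex Rstruct ring boolp.
Set Implicit Arguments. Unset Strict Implicit. Unset Printing Implicit Defensive.
Import GRing.Theory.
Local Open Scope ring_scope.

(* Write 2P(z) = F(z) + sum_(i, +-) S_i(z) mu_i^(+-1), with F the leading term.  The
   commutator [2P(z), 2P(w)] vanishes as soon as each pair of terms contributes a
   product symmetric in z and w, and since conjugation by mu_i^(+-1) only rescales
   lambda_i this is checked pair by pair in the commutative ring of functions of the
   lambda_k:
   - conjugating F(z) by mu_i^(+-1) adds c_i prod_(k <> i) (z - lambda_k), where c_i
     does not depend on z because the term sum_k lambda_k (centre-of-mass frame)
     cancels the linear part; this makes the F / S_i mu_i^(+-1) pairs symmetric;
   - for i <> j, S_i(z) S'_j(w) - S_i(w) S'_j(z), with S'_j the conjugate of S_j, is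
     (lambda_i - lambda_j)^-1 (z - w) times a factor symmetric in i, j that does not
     depend on the shift, so the (i, j) and (j, i) contributions cancel. *)

Lemma big_option (R : Type) (idx : R) (op : Monoid.law idx) (I : finType)
    (F : option I -> R) :
  \big[op/idx]_(a : option I) F a = op (F None) (\big[op/idx]_i F (Some i)).
Proof.
by rewrite ![index_enum _]unlock [@Finite.enum in LHS]unlock /= big_cons big_map.
Qed.

Section SumProductCommute.
Variables (K : fieldType) (A : lalgType K) (I : finType).
Hypothesis two_neq0 : (2%:R : K) != 0.

Lemma sum_mul_sum_comm (x y : I -> A) :
    (forall a b, x a * y b + x b * y a = y a * x b + y b * x a) ->
  (\sum_a x a) * (\sum_b y b) = (\sum_b y b) * (\sum_a x a).
Proof.
move=> xy_sym.
have twice (u v : I -> A) :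
    ((\sum_a u a) * (\sum_b v b)) *+ 2 = \sum_a \sum_b (u a * v b + u b * v a).
  rewrite mulr2n big_distrlr [X in _ + X]exchange_big -big_split /=.
  by apply: eq_bigr => a _; rewrite -big_split.
apply: (scalerI two_neq0); rewrite !scaler_nat !twice.
by apply: eq_bigr => a _; apply: eq_bigr => b _; apply: xy_sym.
Qed.

End SumProductCommute.

Section TodaHamiltonians.
Variables (K : fieldType) (A : algType K) (n : nat).
Variables (lam : 'I_n -> A) (dinv : 'I_n -> 'I_n -> A).
Hypothesis lamC : forall i k, GRing.comm (lam i) (lam k).
Hypothesis dinvK : forall i k, i != k ->
  (lam i - lam k) * dinv i k = 1 /\ dinv i k * (lam i - lam k) = 1.

(* The bicentralizer of the lam_k: a commutative subring containing the lam_k, the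
   scalars and the dinv i k, closed under inverses, in which every rational identity
   of the proof is checked by [ring]. *)
Definition bicentral (x : A) : bool :=
  `[< forall y, (forall k, GRing.comm y (lam k)) -> GRing.comm x y >].

Lemma bicentralP x :
  reflect (forall y, (forall k, GRing.comm y (lam k)) -> GRing.comm x y)
          (x \in bicentral).
Proof. exact: asboolP. Qed.

Lemma bicentral_subring_closed : subring_closed bicentral.
Proof.
split.
- by apply/bicentralP => y _; apply: commr_sym; apply: commr1.
- move=> x y /bicentralP cx /bicentralP cy; apply/bicentralP => u cu.
  by apply: commr_sym; apply: commrB; apply: commr_sym; [apply: cx | apply: cy].
- move=> x y /bicentralP cx /bicentralP cy; apply/bicentralP => u cu.
  by apply: commr_sym; apply: commrM; apply: commr_sym; [apply: cx | apply: cy].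
Qed.

HB.instance Definition _ :=
  GRing.isSubringClosed.Build A bicentral bicentral_subring_closed.

Lemma bicentral_comm x y : x \in bicentral -> y \in bicentral -> GRing.comm x y.
Proof. by move=> /bicentralP cx /bicentralP cy; apply: cx => k; apply: cy. Qed.

Definition bicentral_ring := {x : A | bicentral x}.
HB.instance Definition _ := [isSub for (@proj1_sig A bicentral) : bicentral_ring -> A].
HB.instance Definition _ := [Choice of bicentral_ring by <:].
HB.instance Definition _ := [SubChoice_isSubNzRing of bicentral_ring by <:].

Lemma bicentral_ring_mulC : commutative (@GRing.mul bicentral_ring).
Proof. by move=> x y; apply: val_inj; apply: bicentral_comm; apply: valP. Qed.

HB.instance Definition _ :=
  GRing.PzSemiRing_hasCommutativeMul.Build bicentral_ring bicentral_ring_mulC.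

Definition to_bicentral (x : A) : bicentral_ring := insubd 0 x.

Local Notation "x %:B" := (to_bicentral x) (at level 2, format "x %:B").

Lemma to_bicentralK x : x \in bicentral -> sval (to_bicentral x) = x.
Proof. exact: insubdK. Qed.

Lemma bicentral_lam k : lam k \in bicentral.
Proof. by apply/bicentralP => y cy; apply: commr_sym. Qed.

Lemma bicentral_alg (c : K) : c%:A \in bicentral.
Proof. by apply/bicentralP => y _; rewrite /GRing.comm mulr_algl mulr_algr. Qed.

Lemma bicentral_inv d e :
  d \in bicentral -> d * e = 1 -> e * d = 1 -> e \in bicentral.
Proof.
move=> /bicentralP cd de ed; apply/bicentralP => y cy.
by rewrite /GRing.comm -[e * y]mulr1 -de mulrA -(mulrA e) -(cd y cy) mulrA ed mul1r.
Qed.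

Lemma bicentral_dinv i k : i != k -> dinv i k \in bicentral.
Proof.
move=> ik; have [de ed] := dinvK ik.
by apply: bicentral_inv de ed; rewrite rpredB ?bicentral_lam.
Qed.

Lemma bicentral_bigD1 (P : pred 'I_n) (F : 'I_n -> A) j :
    (forall k, P k -> F k \in bicentral) -> P j ->
  \prod_(k | P k) F k = F j * \prod_(k | P k && (k != j)) F k.
Proof.
move=> PF Pj.
have val_prod (Q : pred 'I_n) : (forall k, Q k -> P k) ->
    \prod_(k | Q k) F k = val (\prod_(k | Q k) to_bicentral (F k)).
  by move=> QP; rewrite rmorph_prod; apply: eq_bigr => k /QP /PF /to_bicentralK.
rewrite [LHS]val_prod // (bigD1 j) //= to_bicentralK ?PF // -val_prod //.
by move=> k /andP[].
Qed.

Lemma dinvN i j : i != j -> dinv j i = - dinv i j.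
Proof.
move=> ij; have [ij_inv _] := dinvK ij.
have [_ ji_inv] : (lam j - lam i) * dinv j i = 1 /\ dinv j i * (lam j - lam i) = 1.
  by apply: dinvK; rewrite eq_sym.
by rewrite -[dinv j i]mulr1 -ij_inv mulrA -opprB mulrN ji_inv mulNr mul1r.
Qed.

Definition lagr_num j (z : K) := \prod_(k < n | k != j) (z%:A - lam k).
Definition lagr_den j := \prod_(k < n | k != j) dinv j k.
Definition lagr j z := lagr_num j z * lagr_den j.
Definition lagr_num2 i j (z : K) := \prod_(k < n | (k != i) && (k != j)) (z%:A - lam k).
Definition lagr_den2 i j := \prod_(k < n | (k != i) && (k != j)) dinv i k.
Definition lam_sum_but j := \sum_(k < n | k != j) lam k.
Definition lead_term (z : K) := (z%:A + \sum_(i < n) lam i) * \prod_(i < n) (z%:A - lam i).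

Lemma bicentral_shifted_lam (c : K) k : c%:A - lam k \in bicentral.
Proof. by rewrite rpredB ?bicentral_alg ?bicentral_lam. Qed.

Lemma bicentral_lagr_num j z : lagr_num j z \in bicentral.
Proof. by apply: rpred_prod => k _; apply: bicentral_shifted_lam. Qed.

Lemma bicentral_lagr_den j : lagr_den j \in bicentral.
Proof. by apply: rpred_prod => k kj; rewrite bicentral_dinv // eq_sym. Qed.

Lemma bicentral_lagr_num2 i j z : lagr_num2 i j z \in bicentral.
Proof. by apply: rpred_prod => k _; apply: bicentral_shifted_lam. Qed.

Lemma bicentral_lagr_den2 i j : lagr_den2 i j \in bicentral.
Proof. by apply: rpred_prod => k /andP[ki _]; rewrite bicentral_dinv // eq_sym. Qed.

Lemma bicentral_lam_sum_but j : lam_sum_but j \in bicentral.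
Proof. by apply: rpred_sum => k _; apply: bicentral_lam. Qed.

Lemma bicentral_lead_term z : lead_term z \in bicentral.
Proof.
rewrite rpredM ?rpredD ?bicentral_alg ?rpred_sum // => [k _|].
  exact: bicentral_lam.
by apply: rpred_prod => k _; apply: bicentral_shifted_lam.
Qed.

Lemma lead_term_split j z :
  lead_term z = (z%:A + lam j + lam_sum_but j) * (z%:A - lam j) * lagr_num j z.
Proof.
rewrite /lead_term (bigD1 j) // addrA -mulrA.
by rewrite (@bicentral_bigD1 xpredT _ j) // => k _; apply: bicentral_shifted_lam.
Qed.

Lemma lagr_num_split i j z : j != i -> lagr_num i z = (z%:A - lam j) * lagr_num2 i j z.
Proof.
move=> ji; rewrite /lagr_num (bicentral_bigD1 (j := j)) // => k _.
exact: bicentral_shifted_lam.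
Qed.

Lemma lagr_den_split i j : j != i -> lagr_den i = dinv i j * lagr_den2 i j.
Proof.
move=> ji; rewrite /lagr_den (bicentral_bigD1 (j := j)) // => k ki.
by rewrite bicentral_dinv // eq_sym.
Qed.

Lemma lagr_num2C i j z : lagr_num2 i j z = lagr_num2 j i z.
Proof. by apply: eq_bigl => k; rewrite andbC. Qed.

Definition qshift (m mi : A) (a : K) p :=
  [/\ m * mi = 1, mi * m = 1, m * lam p = a *: (lam p * m)
    & forall k, k != p -> GRing.comm m (lam k)].

Lemma qshift_inv m mi a p : a != 0 -> qshift m mi a p -> qshift mi m a^-1 p.
Proof.
move=> a0 [mmi mim mlam_p mlam]; split=> // [|k kp].
  rewrite -[lam p * mi]mul1r -mim -!mulrA (mulrA m) mlam_p -scalerAl -scalerAr.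
  by rewrite -!mulrA mmi mulr1 scalerA mulVf // scale1r.
by rewrite /GRing.comm -[mi * _]mulr1 -mmi mulrA -(mulrA mi) -(mlam k kp) !mulrA mim mul1r.
Qed.

Definition lead_defect (a : K) p :=
  (lam p + lam_sum_but p) * lam p - (a%:A * lam p + lam_sum_but p) * (a%:A * lam p).

Ltac bicentral_mem := repeat first
  [ assumption | apply: bicentral_alg | apply: bicentral_lam | apply: bicentral_dinv
  | apply: bicentral_lagr_num | apply: bicentral_lagr_den | apply: bicentral_lagr_num2
  | apply: bicentral_lagr_den2 | apply: bicentral_lam_sum_but | apply: bicentral_lead_term
  | apply: rpredB | apply: rpredD | apply: rpredM ].

Ltac transfer_identity E :=
  have := congr1 val E; rewrite !(rmorphD, rmorphB, rmorphM) /= !to_bicentralK;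
  try solve [bicentral_mem].

Section QShift.
Variables (m mi : A) (a : K) (p : 'I_n).
Hypothesis mq : qshift m mi a p.

Definition conjm x := m * x * mi.

Lemma conjm_is_zmod_morphism : zmod_morphism conjm.
Proof. by move=> x y; rewrite /conjm mulrBr mulrBl. Qed.

Lemma conjm_is_monoid_morphism : monoid_morphism conjm.
Proof.
have [mmi mim _ _] := mq.
by split=> [|x y]; rewrite /conjm ?mulr1 // !mulrA -(mulrA _ mi) mim mulr1.
Qed.

HB.instance Definition _ :=
  GRing.isZmodMorphism.Build A A conjm conjm_is_zmod_morphism.
HB.instance Definition _ :=
  GRing.isMonoidMorphism.Build A A conjm conjm_is_monoid_morphism.

Lemma mul_conjm x : m * x = conjm x * m.
Proof. by have [_ mim _ _] := mq; rewrite /conjm -!mulrA mim mulr1. Qed.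

Lemma conjm_alg (c : K) : conjm c%:A = c%:A.
Proof. by have [mmi _ _ _] := mq; rewrite /conjm mulr_algr -scalerAl mmi. Qed.

Lemma conjm_lam_shift : conjm (lam p) = a%:A * lam p.
Proof.
have [mmi _ mlam_p _] := mq.
by rewrite /conjm mlam_p -scalerAl -mulrA mmi mulr1 mulr_algl.
Qed.

Lemma conjm_lam k : k != p -> conjm (lam k) = lam k.
Proof. by have [mmi _ _ mlam] := mq; move=> kp; rewrite /conjm mlam // -mulrA mmi mulr1. Qed.

Lemma conjm_shifted_lam (c : K) k : k != p -> conjm (c%:A - lam k) = c%:A - lam k.
Proof. by move=> kp; rewrite rmorphB /= conjm_alg conjm_lam. Qed.

Lemma conjm_unit d e : d * e = 1 -> e * d = 1 ->
  conjm d * conjm e = 1 /\ conjm e * conjm d = 1.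
Proof. by move=> de ed; rewrite -!rmorphM de ed rmorph1. Qed.

Lemma conjm_fix_inv d e : d * e = 1 -> e * d = 1 -> conjm d = d -> conjm e = e.
Proof.
move=> de ed fix_d; have [_ e'd] := conjm_unit de ed.
by rewrite -[conjm e]mulr1 -de mulrA -[in conjm e * d]fix_d e'd mul1r.
Qed.

Lemma conjm_lagr_num z : conjm (lagr_num p z) = lagr_num p z.
Proof. by rewrite rmorph_prod; apply: eq_bigr => k; apply: conjm_shifted_lam. Qed.

Lemma conjm_lagr_num2 r z : conjm (lagr_num2 r p z) = lagr_num2 r p z.
Proof. by rewrite rmorph_prod; apply: eq_bigr => k /andP[_]; apply: conjm_shifted_lam. Qed.

Lemma conjm_lagr_den2 r : r != p -> conjm (lagr_den2 r p) = lagr_den2 r p.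
Proof.
move=> rp; rewrite rmorph_prod; apply: eq_bigr => k /andP[kr kp].
have [rk_inv inv_rk] := dinvK (i := r) (k := k) (ltac:(by rewrite eq_sym)).
by apply: conjm_fix_inv rk_inv inv_rk _; rewrite rmorphB /= !conjm_lam.
Qed.

Lemma conjm_lam_sum_but : conjm (lam_sum_but p) = lam_sum_but p.
Proof. by rewrite rmorph_sum; apply: eq_bigr => k; apply: conjm_lam. Qed.

Lemma bicentral_conjm_lagr_den : conjm (lagr_den p) \in bicentral.
Proof.
rewrite rmorph_prod; apply: rpred_prod => k kp.
have [pk_inv inv_pk] := dinvK (i := p) (k := k) (ltac:(by rewrite eq_sym)).
have [pk_inv' inv_pk'] := conjm_unit pk_inv inv_pk.
apply: bicentral_inv pk_inv' inv_pk'.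
by rewrite rmorphB /= conjm_lam_shift conjm_lam //; bicentral_mem.
Qed.

Lemma conjm_lead_term z :
  conjm (lead_term z) = lead_term z + lead_defect a p * lagr_num p z.
Proof.
have expand (Z L S N C : bicentral_ring) :
  (Z + C * L + S) * (Z - C * L) * N
  = (Z + L + S) * (Z - L) * N + ((L + S) * L - (C * L + S) * (C * L)) * N by ring.
rewrite (lead_term_split p) !rmorphM rmorphB !rmorphD /= conjm_alg conjm_lam_shift.
rewrite conjm_lam_sum_but conjm_lagr_num.
transfer_identity
  (expand z%:A%:B (lam p)%:B (lam_sum_but p)%:B (lagr_num p z)%:B a%:A%:B).
by move=> ->.
Qed.

Lemma lead_term_lagr_shift_sym z w :
  lead_term z * (lagr p w * m) + lagr p z * m * lead_term w
  = lead_term w * (lagr p z * m) + lagr p w * m * lead_term z.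
Proof.
have cancel (Fz Fw Lz Lw D E : bicentral_ring) :
  Fz * (Lw * D) + Lz * D * (Fw + E * Lw) = Fw * (Lz * D) + Lw * D * (Fz + E * Lz) by ring.
have shift_right x y : x * m * y = x * conjm y * m by rewrite -mulrA mul_conjm mulrA.
rewrite (mulrA (lead_term z)) (mulrA (lead_term w)) !shift_right -!mulrDl.
rewrite !conjm_lead_term /lagr; congr (_ * m).
transfer_identity (cancel (lead_term z)%:B (lead_term w)%:B
  (lagr_num p z)%:B (lagr_num p w)%:B (lagr_den p)%:B (lead_defect a p)%:B).
by [].
Qed.

Lemma lagr_exchange r z w : r != p ->
  lagr p z * conjm (lagr r w) - lagr p w * conjm (lagr r z)
  = dinv p r * (lagr_num2 p r z * lagr_num2 p r w * (lagr_den2 p r * lagr_den2 r p))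
    * (z%:A - w%:A).
Proof.
move=> rp; have pr : p != r by rewrite eq_sym.
have [rp_inv inv_rp] := dinvK rp.
have [rp_inv' inv_rp'] := conjm_unit rp_inv inv_rp.
rewrite rmorphB /= conjm_lam_shift conjm_lam // in rp_inv' inv_rp'.
set Y := conjm (dinv r p) in rp_inv' inv_rp'.
have Y_bicentral : Y \in bicentral.
  by apply: bicentral_inv rp_inv' inv_rp'; bicentral_mem.
have exchange (Lr Lp C Z W Rz Rw D Qp Qr Y' : bicentral_ring) :
  (Z - Lr) * Rz * (D * Qp) * ((W - C * Lp) * Rw * (Y' * Qr))
  - (W - Lr) * Rw * (D * Qp) * ((Z - C * Lp) * Rz * (Y' * Qr))
  = D * (Rz * Rw * (Qp * Qr)) * (Z - W) * ((Lr - C * Lp) * Y') by ring.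
rewrite /lagr (lagr_num_split z rp) (lagr_num_split w rp) (lagr_num_split w pr).
rewrite (lagr_num_split z pr) (lagr_den_split rp) (lagr_den_split pr) !rmorphM /=.
rewrite !rmorphB /= !conjm_alg conjm_lam_shift !conjm_lagr_num2 conjm_lagr_den2 //.
rewrite !(lagr_num2C r p).
transfer_identity (exchange (lam r)%:B (lam p)%:B a%:A%:B z%:A%:B
  w%:A%:B (lagr_num2 p r z)%:B (lagr_num2 p r w)%:B (dinv p r)%:B
  (lagr_den2 p r)%:B (lagr_den2 r p)%:B Y%:B).
by move=> ->; rewrite rp_inv' mulr1.
Qed.

Lemma lagr_exchange_diag z w :
  lagr p z * conjm (lagr p w) = lagr p w * conjm (lagr p z).
Proof.
have swap (Lz Lw D X : bicentral_ring) : Lz * D * (Lw * X) = Lw * D * (Lz * X) by ring.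
have X_bicentral := bicentral_conjm_lagr_den.
rewrite /lagr !rmorphM /= !conjm_lagr_num.
transfer_identity
  (swap (lagr_num p z)%:B (lagr_num p w)%:B (lagr_den p)%:B (conjm (lagr_den p))%:B).
by [].
Qed.

End QShift.

Lemma lagr_conjm_pair_sym m mi a m' mi' b i j :
    qshift m mi a i -> qshift m' mi' b j -> forall z w,
  lagr i z * conjm m mi (lagr j w) + lagr j z * conjm m' mi' (lagr i w)
  = lagr i w * conjm m mi (lagr j z) + lagr j w * conjm m' mi' (lagr i z).
Proof.
move=> mq; have [<- m'q z w|ij m'q z w] := eqVneq i j.
  by rewrite (lagr_exchange_diag mq) (lagr_exchange_diag m'q).
have ji : j != i by rewrite eq_sym.
apply/eqP; rewrite -subr_eq0 opprD addrACA (lagr_exchange mq z w ji).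
rewrite (lagr_exchange m'q z w ij) (dinvN ij) !(lagr_num2C j i).
rewrite (bicentral_comm (bicentral_lagr_den2 j i) (bicentral_lagr_den2 i j)).
by rewrite !mulNr subrr.
Qed.

Lemma lagr_qshift_pair_sym m mi a m' mi' b i j :
    qshift m mi a i -> qshift m' mi' b j -> GRing.comm m m' -> forall z w,
  lagr i z * m * (lagr j w * m') + lagr j z * m' * (lagr i w * m)
  = lagr i w * m * (lagr j z * m') + lagr j w * m' * (lagr i z * m).
Proof.
move=> mq m'q mm' z w.
have move_m x y : x * m * (y * m') = x * conjm m mi y * (m * m').
  by rewrite mulrA -(mulrA x m y) (mul_conjm mq y) !mulrA.
have move_m' x y : x * m' * (y * m) = x * conjm m' mi' y * (m * m').
  by rewrite mm' mulrA -(mulrA x m' y) (mul_conjm m'q y) !mulrA.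
by rewrite !move_m !move_m' -!mulrDl (lagr_conjm_pair_sym mq m'q).
Qed.

Section Hamiltonian.
Variables (mu muinv : 'I_n -> A) (q : K).
Hypothesis q_neq0 : q != 0.
Hypothesis muC : forall i j, GRing.comm (mu i) (mu j).
Hypothesis muK : forall i, mu i * muinv i = 1 /\ muinv i * mu i = 1.
Hypothesis mu_lam : forall j, mu j * lam j = q *: (lam j * mu j).
Hypothesis mu_lamC : forall i j, i != j -> GRing.comm (mu j) (lam i).

Definition mu_pm i (b : bool) := if b then mu i else muinv i.

Lemma qshift_mu_pm i b :
  qshift (mu_pm i b) (mu_pm i (~~ b)) (if b then q else q^-1) i.
Proof.
have mu_q : qshift (mu i) (muinv i) q i.
  by have [mmi mim] := muK i; split=> // k ki; apply: mu_lamC.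
by case: b => //; apply: qshift_inv.
Qed.

Lemma mu_pmC i j b c : GRing.comm (mu_pm i b) (mu_pm j c).
Proof.
have comm_inv k x : GRing.comm x (mu k) -> GRing.comm x (muinv k).
  have [mmi mim] := muK k => xm.
  by rewrite /GRing.comm -[x * _]mul1r -mim -!mulrA (mulrA (mu k)) -xm -!mulrA mmi mulr1.
have comm_mu_pm x : GRing.comm x (mu j) -> GRing.comm x (mu_pm j c).
  by case: c => //; apply: comm_inv.
case: b => /=; apply: comm_mu_pm => //.
by apply/commr_sym/comm_inv/commr_sym.
Qed.

Definition toda_term (t : option ('I_n * bool)) z :=
  if t is Some (i, b) then lagr i z * mu_pm i b else lead_term z.

Lemma toda_term_pair_sym s t z w :
  toda_term s z * toda_term t w + toda_term t z * toda_term s w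
  = toda_term s w * toda_term t z + toda_term t w * toda_term s z.
Proof.
have lead_pair i b x y (u := toda_term (Some (i, b))) :
    lead_term x * u y + u x * lead_term y = lead_term y * u x + u y * lead_term x.
  exact: lead_term_lagr_shift_sym (qshift_mu_pm i b) x y.
case: s t => [[i b]|] [[j c]|] /=.
- exact: lagr_qshift_pair_sym (qshift_mu_pm i b) (qshift_mu_pm j c) (mu_pmC i j b c) z w.
- by rewrite addrC [RHS]addrC lead_pair.
- exact: lead_pair.
- by rewrite (bicentral_comm (bicentral_lead_term z) (bicentral_lead_term w)).
Qed.

Lemma toda_term_sum z :
  lead_term z + \sum_(i < n) lagr i z * (mu i + muinv i)
  = \sum_(t : option ('I_n * bool)) toda_term t z.
Proof.
rewrite big_option; congr (_ + _).
rewrite (eq_bigr (fun i => \sum_b lagr i z * mu_pm i b)) => [|i _].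
  by rewrite pair_bigA; apply: eq_bigr => -[i b].
by rewrite big_bool mulrDr.
Qed.

Lemma toda_hamiltonians_comm z w : (2%:R : K) != 0 ->
  GRing.comm (lead_term z + \sum_(i < n) lagr i z * (mu i + muinv i))
             (lead_term w + \sum_(i < n) lagr i w * (mu i + muinv i)).
Proof.
move=> two_neq0; rewrite /GRing.comm !toda_term_sum.
by apply: sum_mul_sum_comm => // s t; apply: toda_term_pair_sym.
Qed.

End Hamiltonian.

End TodaHamiltonians.

Unset Implicit Arguments.

Theorem mainTheorem6 (A : algType CC) (n : nat) (q : CC)
  (lam mu muinv : 'I_n -> A) (dinv : 'I_n -> 'I_n -> A) :
  (0 < n)%N ->
  q != 0 ->
  (forall i k, lam i * lam k = lam k * lam i) ->
  (forall i k, i != k ->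
     (lam i - lam k) * dinv i k = 1 /\ dinv i k * (lam i - lam k) = 1) ->
  (forall i j, mu i * mu j = mu j * mu i) ->
  (forall i, mu i * muinv i = 1 /\ muinv i * mu i = 1) ->
  (forall j, mu j * lam j = q *: (lam j * mu j)) ->
  (forall i j, i != j -> mu j * lam i = lam i * mu j) ->
  forall z z' : CC,
    P lam mu muinv dinv z * P lam mu muinv dinv z'
    = P lam mu muinv dinv z' * P lam mu muinv dinv z.
Proof.
move=> _ q_neq0 lamC dinvK muC muK mu_lam mu_lamC z z'.
have two_neq0 : (2%:R : CC) != 0 by rewrite (@Num.Theory.pnatr_eq0 (complex Rdefinitions.R)).
rewrite /P -!scalerAl -!scalerAr; congr (_ *: (_ *: _)).
exact: (toda_hamiltonians_comm lamC dinvK q_neq0 muC muK mu_lam mu_lamC z z' two_neq0).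
Qed.
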